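(* Let $\overleftarrow\sigma=(\sigma_n:\mathcal A_{n+1}^*\to\mathcal A_n^* )_{n\ge0}$ be an everywhere growing directive sequence and $\overleftarrow v=(\vec v_n)_{n\ge0}$ a vector tower over $\overleftarrow\sigma$. For each $k\ge0$ let $\mu_k=\mathfrak m_k(\overleftarrow v\dagger_k)\in\mathcal M(X_k)$. Then $\sigma_k^{\mathcal M}(\mu_{k+1})=\mu_k$ for all $k\ge0$, i.e. $(\mu_k)_{k\ge0}$ is a measure tower on $\overleftarrow\sigma$.
   Context: Directive sequence: non-erasing monoid morphisms $\sigma_n:\mathcal A_{n+1}^*\to\mathcal A_n^*$ over finite alphabets; $\sigma_{[n,m)}=\sigma_n\circ\cdots\circ\sigma_{m-1}$; everywhere growing means $\min_{a\in\mathcal A_n}|\sigma_{[0,n)}(a)|\to\infty$. The truncated sequence $\overleftarrow\sigma\dagger_k=(\sigma_n)_{n\ge k}$; the level subshift $X_k\subseteq\mathcal A_k^{\mathbb Z}$ is the subshift generated by $\overleftarrow\sigma\dagger_k$, i.e. all $\mathbf x$ whose finite factors are factors of some $\sigma_{[k,n)}(a)$, $n>k$, $a\in\mathcal A_n$. $M(\sigma)=(|\sigma(a)|_b)_{b,a}$ is the incidence matrix. A vector tower is $(\vec v_n)$, $\vec v_n\in\mathbb R_{\ge0}^{\mathcal A_n}$, with $\vec v_n=M(\sigma_n)\vec v_{n+1}$; its truncation is $\overleftarrow v\dagger_k=(\vec v_n)_{n\ge k}$, a vector tower over $\overleftarrow\sigma\dagger_k$. The evaluation $\mathfrak m_k(\overleftarrow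 v\dagger_k)$ is the invariant measure $\mu$ on $X_k$ with $\mu([w])=\lim_{n\to\infty}\sum_{a\in\mathcal A_n}\vec v_n(a)|\sigma_{[k,n)}(a)|_w$ for $w\in\mathcal A_k^*$ ($|u|_w$ = number of possibly overlapping occurrences; $[w]=\{\mathbf x:\mathbf x_{[1,|w|]}=w\}$). $\mathcal M(Y)$ = finite shift-invariant Borel measures supported in $Y$. A measure tower on $\overleftarrow\sigma$ is a sequence $\mu_n\in\mathcal M(\mathcal A_n^{\mathbb Z})$ with $\mu_n=\sigma_n^{\mathcal M}(\mu_{n+1})$ for all $n$. Measure transfer for non-erasing $\sigma:\mathcal A^*\to\mathcal B^*$: with $\mathcal A_\sigma=\{a(k):1\le k\le|\sigma(a)|\}$, $\pi_\sigma(a)=a(1)\cdots a(|\sigma(a)|)$, $\alpha_\sigma(a(k))=$ $k$-th letter of $\sigma(a)$, and $\widehat w$ the shortest word in $\mathcal A^*$ whose $\pi_\sigma$-image contains $w\in\mathcal A_\sigma^*$ (with $\mu([\widehat w]):=0$ if none), $\sigma^{\mathcal M}(\mu)([w'])=\sum_{\alpha_\sigma(w)=w'}\mu([\widehat w])$. *)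

From HB Require Import structures.
From mathcomp Require Import all_boot all_order all_algebra.
From mathcomp Require Import all_classical all_reals all_analysis.
Set Implicit Arguments. Unset Strict Implicit. Unset Printing Implicit Defensive.
Import Order.TTheory GRing.Theory Num.Theory.
Local Open Scope ring_scope.

(* A monoid morphism A^* -> B^* is given by its letter images s : A -> seq B;
   its action on words is [morph s]. *)
Definition morph {A B : Type} (s : A -> seq B) (u : seq A) : seq B :=
  flatten (map s u).

Definition nonerasing {A B : Type} (s : A -> seq B) : Prop :=
  forall a, (0 < size (s a))%N.

(* |u|_w : number of (possibly overlapping) occurrences of w in u
   (used only for nonempty w). *)
Definition occ {T : eqType} (w u : seq T) : nat :=
  \sum_(i < (size u).+1) (take (size w) (drop i u) == w).

(* comp s k d = sigma_[k, k+d) = sigma_k o ... o sigma_(k+d-1),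
   a map (A_(d+k))^* -> (A_k)^*. *)
Fixpoint comp (A : nat -> finType) (s : forall n, A n.+1 -> seq (A n))
  (k d : nat) {struct d} : seq (A (d + k)) -> seq (A k) :=
  match d return seq (A (d + k)) -> seq (A k) with
  | 0 => fun u => u
  | d'.+1 => fun u => @comp A s k d' (morph (s (d' + k)) u)
  end.
Arguments comp {A} s k d u.

Definition everywhere_growing (A : nat -> finType)
  (s : forall n, A n.+1 -> seq (A n)) : Prop :=
  forall M : nat, exists N : nat, forall d : nat, (N <= d)%N ->
    forall a : A (d + 0)%N, (M <= size (comp s 0 d [:: a]))%N.

(* vector tower: v_n >= 0 and v_n = M(sigma_n) v_(n+1),
   M(sigma)_(b,a) = |sigma(a)|_b *)
Definition vector_tower (R : realType) (A : nat -> finType)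
  (s : forall n, A n.+1 -> seq (A n)) (v : forall n, A n -> R) : Prop :=
  forall n (b : A n), 0 <= v n b /\
    v n b = \sum_(a : A n.+1) (count_mem b (s n a))%:R * v n.+1 a.

(* A (shift-invariant, finite) measure on A^Z is represented by its values on
   cylinders [w] = {x : x_[1,|w|] = w}, i.e. by a function seq A -> R.
   Evaluation m_k(v dagger_k): mu([w]) = lim_n sum_(a in A_n) v_n(a) |sigma_[k,n)(a)|_w,
   written with n = d + k. *)
Definition level_meas (R : realType) (A : nat -> finType)
  (s : forall n, A n.+1 -> seq (A n)) (v : forall n, A n -> R) (k : nat)
  (w : seq (A k)) : R :=
  limn (fun d : nat =>
    \sum_(a : A (d + k)%N) v (d + k)%N a * (occ w (comp s k d [:: a]))%:R).
Arguments level_meas {R A} s v k w.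

(* Measure transfer. The letters of A_sigma: a(j), 0 <= j < |sigma(a)|
   (0-indexed version of a(1..|sigma(a)|)). *)
Section Transfer.
Variables (A B : finType) (s : A -> seq B).

Definition alpha (x : {a : A & 'I_(size (s a))}) : B :=
  tnth (in_tuple (s (tag x))) (tagged x).

Definition piw (u : seq A) : seq {a : A & 'I_(size (s a))} :=
  flatten (map (fun a => [seq @Tagged A a (fun a => 'I_(size (s a))) j
                         | j <- enum 'I_(size (s a))]) u).

Definition hat_exists (w : seq {a : A & 'I_(size (s a))}) (n : nat) : bool :=
  [exists u : n.-tuple A, infix w (piw u)].

(* hat w : the shortest word u in A^* with w a factor of pi_sigma(u), if any *)
Definition hat (w : seq {a : A & 'I_(size (s a))}) : option (seq A) :=
  match pselect (exists n, hat_exists w n) with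
  | left e =>
      omap (fun u : (@ex_minn (hat_exists w) e).-tuple A => val u)
           [pick u : (@ex_minn (hat_exists w) e).-tuple A | infix w (piw u)]
  | right _ => None
  end.

(* sigma^M(mu)([w']) = sum_{alpha(w) = w'} mu([hat w]), mu([hat w]) := 0 if none *)
Definition transfer (R : realType) (mu : seq A -> R) (w' : seq B) : R :=
  \sum_(t : (size w').-tuple {a : A & 'I_(size (s a))} | map alpha t == w')
     match hat t with Some u => mu u | None => 0 end.

End Transfer.
Arguments transfer {A B} s {R} mu w'.

From Pilot Require Import Defs.
From HB Require Import structures.
From mathcomp Require Import all_boot all_order all_algebra.
From mathcomp Require Import all_classical all_reals all_analysis.
Import Order.TTheory GRing.Theory Num.Theory numFieldNormedType.Exports.
Local Open Scope ring_scope.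
Set Implicit Arguments. Unset Strict Implicit. Unset Printing Implicit Defensive.

(* An occurrence of [w] in [sigma_k(U)] is the image under [alpha] of an
   occurrence in [pi(U)] of exactly one word [t] with [alpha(t) = w].  If [t]
   is nonempty and [hat t = a :: u] is its shortest cover, minimality forces
   every occurrence of [t] to start in a block of the letter [a] at one fixed
   offset, and then to continue exactly along [u]; so occurrences of [t] in
   [pi(U)] correspond to occurrences of [hat t] in [U].  Hence
   [|sigma_k(U)|_w = sum_(alpha t = w) |U|_(hat t)].  Applied to
   [U = sigma_[k+1,n)(a)], this identifies the approximants of [mu_k([w])]
   with finite sums of approximants of the [mu_(k+1)([hat t])].  All these
   approximants are nondecreasing in [n] (occurrence counts are superadditive
   under concatenation and [v] is a vector tower) and bounded by the total
   mass [sum v_k], so they converge and the limit commutes with the finite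
   sum. *)

Section Occurrences.
Variable T : eqType.
Implicit Types w p q u : seq T.

Lemma occE w u : occ w u = (\sum_(i < (size u).+1) prefix w (drop i u))%N.
Proof. by apply: eq_bigr => i _; rewrite prefixE. Qed.

Lemma occ_nil w : w != [::] -> occ w [::] = 0%N.
Proof. by move=> wn; rewrite occE big_ord1 drop0 prefixs0 (negbTE wn). Qed.

Lemma occ_cons w x u : occ w (x :: u) = (prefix w (x :: u) + occ w u)%N.
Proof. by rewrite !occE big_ord_recl. Qed.

Lemma occ_cat w p q :
  occ w (p ++ q) = (\sum_(i < size p) prefix w (drop i p ++ q) + occ w q)%N.
Proof.
elim: p => [|x p IHp]; first by rewrite big_ord0.
by rewrite cat_cons occ_cons IHp big_ord_recl addnA.
Qed.

Lemma occ_le_size w u : w != [::] -> (occ w u <= size u)%N.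
Proof.
move=> wn; elim: u => [|x u IHu]; first by rewrite occ_nil.
by rewrite occ_cons -[size _]/(1 + size u)%N leq_add ?leq_b1.
Qed.

Lemma occ_cat_ge w p q : w != [::] -> (occ w p + occ w q <= occ w (p ++ q))%N.
Proof.
move=> wn; elim: p => [|x p IHp]; first by rewrite occ_nil.
rewrite cat_cons !occ_cons -addnA leq_add //.
by case hp: (prefix w (x :: p)) => //; rewrite -cat_cons prefix_catl.
Qed.

Lemma occ_eq0 w u : w != [::] -> ~~ infix w u -> occ w u = 0%N.
Proof.
move=> wn; elim: u => [|x u IHu]; first by rewrite occ_nil.
by rewrite infix_consl negb_or occ_cons => /andP[/negbTE-> /IHu->].
Qed.

Lemma occ_map (X : finType) (f : X -> T) w (u : seq X) :
  occ w (map f u) = (\sum_(t : (size w).-tuple X | map f t == w) occ t u)%N.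
Proof.
rewrite /occ size_map exchange_big /=; apply: eq_bigr => i _.
rewrite -map_drop -map_take; set x := take (size w) (drop i u).
have [hx|hx] := eqVneq (size x) (size w).
  pose tx : (size w).-tuple X := Tuple (introT eqP hx).
  rewrite big_mkcond (bigD1 tx) //= big1 ?addn0; first by rewrite hx eqxx.
  move=> t htx; rewrite size_tuple; case: ifP => // _.
  case: eqP => // ext; case/eqP: htx.
  by apply/val_inj => /=; rewrite -ext.
rewrite big1; first by case: eqP => // hm; case/eqP: hx; rewrite -hm size_map.
move=> t _; rewrite size_tuple; case: eqP => // ext; case/eqP: hx.
by rewrite /x ext size_tuple.
Qed.

Lemma prefix_ohead p q : prefix p q -> p != [::] -> ohead p = ohead q.
Proof. by case: p q => [|x p] [|y q] //= /andP[/eqP->]. Qed.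

End Occurrences.

Lemma dropl_cat (T : Type) n (s1 s2 : seq T) :
  (n <= size s1)%N -> drop n (s1 ++ s2) = drop n s1 ++ s2.
Proof.
rewrite drop_cat leq_eqVlt => /orP[/eqP->|->] //.
by rewrite ltnn subnn drop0 drop_size.
Qed.

Section Pi.
Variables (A B : finType) (s : A -> seq B).
Hypothesis s_nonerasing : nonerasing s.
Local Notation X := {a : A & 'I_(size (s a))}.
Implicit Types (a b c : A) (u U : seq A) (t : seq X).

Definition block a : seq X :=
  [seq @Tagged A a (fun a => 'I_(size (s a))) j | j <- enum 'I_(size (s a))].

Lemma piw_cons a u : piw s (a :: u) = block a ++ piw s u.
Proof. by []. Qed.

Lemma piw_cat u1 u2 : piw s (u1 ++ u2) = piw s u1 ++ piw s u2.
Proof. by rewrite /piw map_cat flatten_cat. Qed.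

Lemma piw_rcons u c : piw s (rcons u c) = piw s u ++ block c.
Proof. by rewrite -cats1 piw_cat piw_cons cats0. Qed.

Lemma size_block a : size (block a) = size (s a).
Proof. by rewrite size_map size_enum_ord. Qed.

Lemma block_neq0 a : block a != [::].
Proof. by rewrite -size_eq0 size_block -lt0n s_nonerasing. Qed.

Lemma morph_piw u : morph s u = map (@alpha _ _ s) (piw s u).
Proof.
elim: u => [|a u IHu] //; rewrite piw_cons map_cat -IHu; congr (_ ++ _).
rewrite -map_comp -[LHS](map_tnth_enum (in_tuple (s a))); exact: eq_map.
Qed.

Lemma ohead_drop_block a i Q (hi : (i < size (s a))%N) :
  ohead (drop i (block a) ++ Q) =
  Some (Tagged (fun a => 'I_(size (s a))) (Ordinal hi)).
Proof.
rewrite (drop_nth (Tagged _ (Ordinal hi) : X)) ?size_block //= /block.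
rewrite (nth_map (Ordinal hi)) ?size_enum_ord //; congr (Some (Tagged _ _)).
by apply: val_inj; rewrite /= nth_enum_ord.
Qed.

Lemma ohead_drop_block_inj a b i j P Q :
  (i < size (s a))%N -> (j < size (s b))%N ->
  ohead (drop i (block a) ++ P) = ohead (drop j (block b) ++ Q) -> a = b /\ i = j.
Proof.
move=> hi hj; rewrite !ohead_drop_block.
by move=> /(congr1 (omap (fun x : X => (tag x, val (tagged x))))) [-> ->].
Qed.

Lemma prefix_piw_rcons u c r U : (0 < r)%N ->
  prefix (piw s u ++ take r (block c)) (piw s U) = prefix (rcons u c) U.
Proof.
move=> r_gt0; have take_neq0 b : take r (block b) != [::].
  by rewrite -size_eq0 size_take size_block; case: ifP; rewrite -lt0n ?r_gt0.
elim: u U => [|a u IHu] [|b U]; rewrite ?piw_cons [rcons _ _]/= ?prefix_cons.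
- by rewrite prefixs0 (negbTE (take_neq0 c)).
- rewrite prefix0s andbT; case: eqP => [->|ne].
    exact: prefix_trans (prefix_take _ _) (prefix_prefix _ _).
  apply/negP => /prefix_ohead/(_ (take_neq0 c)).
  rewrite (prefix_ohead (prefix_catl [::] (prefix_take _ r)) (take_neq0 c)).
  rewrite -(drop0 (block c)) -(drop0 (block b)).
  by move/ohead_drop_block_inj => /(_ (s_nonerasing c) (s_nonerasing b)) [].
- by rewrite prefixs0 -catA; case: (block a) (block_neq0 a).
- rewrite -catA; case: eqP => [->|ne]; first by rewrite prefix_catr // eqxx IHu.
  have nz : block a ++ (piw s u ++ take r (block c)) != [::].
    by case: (block a) (block_neq0 a).
  apply/negP => /prefix_ohead/(_ nz).
  rewrite -(drop0 (block a)) -(drop0 (block b)).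
  by move/ohead_drop_block_inj => /(_ (s_nonerasing a) (s_nonerasing b)) [].
Qed.

Definition minimal_cover t u : Prop :=
  infix t (piw s u) /\ forall u', (size u' < size u)%N -> ~~ infix t (piw s u').

Lemma hatP t : match hat t with
  | Some u => minimal_cover t u
  | None => forall u, ~~ infix t (piw s u)
  end.
Proof.
rewrite /hat; case: pselect => [ex|nex]; last first.
  move=> u; apply/negP => tu; apply: nex.
  by exists (size u); apply/existsP; exists (in_tuple u).
case: ex_minnP => n /existsP[u0 tu0] n_min.
case: pickP => [u tu|/(_ u0)]; last by rewrite tu0.
split=> // u' lt_u'; apply/negP => tu'; move: lt_u'; rewrite size_tuple ltnNge.
by rewrite n_min //; apply/existsP; exists (in_tuple u').
Qed.

Lemma minimal_cover_neq0 t u : t != [::] -> minimal_cover t u -> u != [::].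
Proof. by move=> tn [tu _]; apply: contraNneq tn => u0; rewrite u0 infixs0 in tu. Qed.

Lemma minimal_cover_head t a u : minimal_cover t (a :: u) ->
  exists2 j, (j < size (s a))%N & prefix t (drop j (block a) ++ piw s u).
Proof.
move=> [/infixP[P [Y tPY]] cover_min].
have dropP : drop (size P) (block a ++ piw s u) = t ++ Y.
  by rewrite -piw_cons tPY drop_size_cat.
have ltPa : (size P < size (s a))%N.
  rewrite ltnNge; apply: contraNN (cover_min u (ltnSn _)) => leaP.
  apply/infixP; exists (drop (size (s a)) P), Y.
  by rewrite -(drop_size_cat (piw s u) (size_block a)) -piw_cons tPY dropl_cat.
exists (size P) => //.
by rewrite -(dropl_cat _ (ltnW _)) ?size_block // dropP prefix_prefix.
Qed.

Lemma minimal_cover_prefix t a u j U : minimal_cover t (a :: u) ->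
  prefix t (drop j (block a) ++ piw s u) ->
  prefix t (drop j (block a) ++ piw s U) = prefix u U.
Proof.
case/lastP: u => [|u c] [_ cover_min] tj.
  by rewrite prefix0s; rewrite cats0 in tj; apply: prefix_catl.
set D := drop j (block a) ++ piw s u.
have tD : ~~ prefix t D.
  apply: contraNN (cover_min (a :: u) _) => [tD|]; last by rewrite /= size_rcons ltnSn.
  by rewrite piw_cons -(cat_take_drop j (block a)) -catA infix_catl ?prefixW.
move: tj; rewrite piw_rcons catA -/D prefixE.
have [leD|ltD] := leqP (size t) (size D).
  by rewrite takel_cat // -prefixE (negbTE tD).
rewrite take_cat ltnNge (ltnW ltD) /= => /eqP <-.
by rewrite /D -catA prefix_catr // eqxx prefix_piw_rcons // subn_gt0.
Qed.

Lemma prefix_drop_block_cover t a u j b i U :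
  t != [::] -> minimal_cover t (a :: u) ->
  (j < size (s a))%N -> prefix t (drop j (block a) ++ piw s u) ->
  (i < size (s b))%N ->
  prefix t (drop i (block b) ++ piw s U) = [&& b == a, i == j & prefix u U].
Proof.
move=> tn cover ltja tj ltib.
have [/andP[/eqP-> /eqP->]|] := boolP ((b == a) && (i == j)).
  by rewrite !eqxx (minimal_cover_prefix _ cover tj).
move=> /negbTE not_start; rewrite andbA not_start.
apply/negP => /prefix_ohead/(_ tn); rewrite (prefix_ohead tj tn).
by move=> /(ohead_drop_block_inj ltja ltib) [ab ji]; rewrite ab ji !eqxx in not_start.
Qed.

Lemma occ_piw_minimal_cover t u U : t != [::] -> minimal_cover t u ->
  occ t (piw s U) = occ u U.
Proof.
move=> tn cover; have := minimal_cover_neq0 tn cover.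
case: u cover => // a u cover _.
have [j ltja tj] := minimal_cover_head cover.
elim: U => [|b U IHU]; first by rewrite !occ_nil.
rewrite piw_cons occ_cat occ_cons IHU prefix_cons; congr addn.
under eq_bigr => i _ do
  rewrite (prefix_drop_block_cover _ tn cover ltja tj) -?size_block //.
case: eqVneq => [->|ba] /=; last by rewrite big1 // eq_sym (negbTE ba).
have ltj : (j < size (block a))%N by rewrite size_block.
rewrite (bigD1 (Ordinal ltj)) //= eqxx big1 ?addn0 // => i.
by rewrite -val_eqE /= => /negbTE->.
Qed.

Lemma occ_morph w U : w != [::] ->
  occ w (morph s U) =
  (\sum_(t : (size w).-tuple X | map (@alpha _ _ s) t == w)
     if hat (tval t) is Some u then occ u U else 0)%N.
Proof.
move=> wn; rewrite morph_piw occ_map; apply: eq_bigr => t /eqP tw.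
have tn : tval t != [::] by apply: contra wn => /eqP t0; rewrite -tw t0.
have := hatP t; case: (hat (tval t)) => [u cover|no_cover].
  exact: occ_piw_minimal_cover.
exact: occ_eq0.
Qed.
End Pi.

Lemma sum_count_mem (R : nmodType) (T : finType) (F : T -> R) (r : seq T) :
  \sum_(x <- r) F x = \sum_(y : T) F y *+ count_mem y r.
Proof.
elim: r => [|x r IHr]; first by rewrite big_nil big1.
rewrite big_cons IHr (bigD1 x) //= [in RHS](bigD1 x) //= eqxx mulrSr.
rewrite addrCA addrA; congr (_ + _).
by apply: eq_bigr => y /negbTE yx; rewrite eq_sym yx.
Qed.

Section Levels.
Variables (R : realType) (A : nat -> finType)
  (s : forall n, A n.+1 -> seq (A n)) (v : forall n, A n -> R).
Arguments s : clear implicits.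
Arguments v : clear implicits.
Hypotheses (s_nonerasing : forall n, nonerasing (s n)) (v_tower : vector_tower s v).
Local Notation sigma := (Defs.comp s).

Lemma comp_cat k d (p q : seq (A (d + k))) :
  sigma k d (p ++ q) = sigma k d p ++ sigma k d q.
Proof. by elim: d p q => [|d IHd] p q //=; rewrite /morph map_cat flatten_cat IHd. Qed.

Lemma comp_nil k d : sigma k d [::] = [::].
Proof. by elim: d. Qed.

Lemma compSr k d u : sigma k d.+1 u = sigma k d (morph (s (d + k)) u).
Proof. by []. Qed.

Lemma comp_seq1S k d (a : A (d.+1 + k)) :
  sigma k d.+1 [:: a] = sigma k d (s (d + k) a).
Proof. by rewrite compSr /morph /= cats0. Qed.

Lemma tower_sum n (F : A n -> R) :
  \sum_(a : A n.+1) v n.+1 a * \sum_(b <- s n a) F b = \sum_(b : A n) v n b * F b.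
Proof.
under eq_bigr do rewrite sum_count_mem mulr_sumr.
rewrite exchange_big; apply: eq_bigr => b _.
rewrite (proj2 (v_tower b)) mulr_suml; apply: eq_bigr => a _.
by rewrite mulrnAr mulr_natl mulrnAl.
Qed.

Lemma size_comp k d (p : seq (A (d + k))) :
  size (sigma k d p) = (\sum_(b <- p) size (sigma k d [:: b]))%N.
Proof.
elim: p => [|b p IHp]; first by rewrite big_nil comp_nil.
by rewrite big_cons -[b :: p]cat1s comp_cat size_cat IHp.
Qed.

Lemma sum_occ_comp_le k d (u : seq (A k)) (p : seq (A (d + k))) : u != [::] ->
  (\sum_(b <- p) occ u (sigma k d [:: b]) <= occ u (sigma k d p))%N.
Proof.
move=> un; elim: p => [|b p IHp]; first by rewrite big_nil.
rewrite big_cons -[b :: p]cat1s comp_cat.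
exact: leq_trans (leq_add (leqnn _) IHp) (occ_cat_ge _ _ un).
Qed.

Definition level_occ k (u : seq (A k)) d : R :=
  \sum_(a : A (d + k)) v (d + k) a * (occ u (sigma k d [:: a]))%:R.

Lemma level_mass k d :
  \sum_(a : A (d + k)) v (d + k) a * (size (sigma k d [:: a]))%:R =
  \sum_(a : A k) v k a.
Proof.
elim: d => [|d IHd]; first by apply: eq_bigr => a _; rewrite mulr1.
under eq_bigr do rewrite comp_seq1S size_comp natr_sum.
by rewrite (tower_sum (fun b => (size (sigma k d [:: b]))%:R)).
Qed.

Lemma nondecreasing_level_occ k (u : seq (A k)) :
  u != [::] -> nondecreasing_seq (level_occ u).
Proof.
move=> un; apply/nondecreasing_seqP => d; rewrite /level_occ.
under [leRHS]eq_bigr do rewrite comp_seq1S.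
rewrite -(tower_sum (fun b => (occ u (sigma k d [:: b]))%:R)).
apply: ler_sum => a _; apply: ler_wpM2l; first exact: (proj1 (v_tower a)).
by rewrite -natr_sum ler_nat sum_occ_comp_le.
Qed.

Lemma is_cvg_level_occ k (u : seq (A k)) : u != [::] -> cvgn (level_occ u).
Proof.
move=> un; apply: nondecreasing_is_cvgn; first exact: nondecreasing_level_occ.
exists (\sum_(a : A k) v k a) => _ [d _ <-].
rewrite -(level_mass k d); apply: ler_sum => a _.
apply: ler_wpM2l; first exact: (proj1 (v_tower a)).
by rewrite ler_nat occ_le_size.
Qed.

(* [d.+1 + k] and [d + k.+1] are not convertible: the letters of level
   [k + d + 1] must be transported between the two indexings. *)
Definition castA {n1 n2} (e : n1 = n2) (a : A n1) : A n2 := eq_rect n1 A a n2 e.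

Lemma castA_id {n} (e : n = n) a : castA e a = a.
Proof. by rewrite (eq_irrelevance e erefl). Qed.

Lemma sum_castA {n1 n2} (e : n1 = n2) (F : A n2 -> R) :
  \sum_(a : A n2) F a = \sum_(a : A n1) F (castA e a).
Proof. by case: n2 / e F. Qed.

Lemma v_castA {n1 n2} (e : n1 = n2) a : v n2 (castA e a) = v n1 a.
Proof. by case: n2 / e. Qed.

Lemma morph_castA {n1 n2} (e : n1 = n2) (e' : n1.+1 = n2.+1) u :
  map (castA e) (morph (s n1) u) = morph (s n2) (map (castA e') u).
Proof. by case: n2 / e e' => e'; rewrite !(eq_map (castA_id _)) !map_id. Qed.

Lemma compSl k d (u : seq (A (d + k.+1))) :
  sigma k d.+1 (map (castA (addnS d k)) u) = morph (s k) (sigma k.+1 d u).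
Proof.
elim: d u => [|d IHd] u; first by rewrite /= (eq_map (castA_id _)) map_id.
by rewrite compSr -(morph_castA (addnS d k)) IHd.
Qed.

Lemma level_occS k (w : seq (A k)) d : w != [::] ->
  level_occ w d.+1 =
  \sum_(t : (size w).-tuple _ | map (@alpha _ _ (s k)) t == w)
     if hat (tval t) is Some u then level_occ u d else 0.
Proof.
move=> wn; rewrite /level_occ (sum_castA (addnS d k)).
under eq_bigr => a _ do
  rewrite v_castA -[[:: castA _ a]]/(map (castA (addnS d k)) [:: a]) compSl
          (occ_morph (@s_nonerasing k) _ wn).
under eq_bigr do rewrite natr_sum mulr_sumr.
rewrite exchange_big; apply: eq_bigr => t _.
by case: (hat (tval t)) => [u|]; last by rewrite big1 // => a; rewrite mulr0.
Qed.
End Levels.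

Theorem lemma5p2 (R : realType) (A : nat -> finType)
  (s : forall n, A n.+1 -> seq (A n)) (v : forall n, A n -> R) :
  (forall n, nonerasing (s n)) ->
  everywhere_growing s ->
  vector_tower s v ->
  forall (k : nat) (w : seq (A k)), w != [::] ->
    transfer (s k) (level_meas s v k.+1) w = level_meas s v k w.
Proof.
move=> s_nonerasing _ v_tower k w wn; apply/esym/cvg_lim => //.
rewrite -cvg_shiftS (funext (fun d => level_occS v s_nonerasing d wn)).
apply: cvg_big => [|t /eqP tw]; first exact: add_continuous.
have tn : tval t != [::] by apply: contraNneq wn => t0; rewrite -tw t0.
have := hatP (tval t).
case: (hat (tval t)) => [u cover|_]; last exact: cvg_cst.
exact: (is_cvg_level_occ v_tower (minimal_cover_neq0 tn cover)).
Qed.
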